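(* Let $A_G \in \mathbb{R}^{n_G\times n_G}$, $B_G \in \mathbb{R}^{n_G\times n_u}$ and consider the discrete-time plant $x(k+1) = A_G x(k) + B_G u(k)$ in feedback with the neural-network controller $u(k)=\pi(x(k))$ defined by $w^0(k)=x(k)$, $w^i(k)=\phi^i(W^i w^{i-1}(k))$ for $i=1,\dots,\ell$, $u(k)=W^{\ell+1}w^\ell(k)$, where $W^i\in\mathbb{R}^{n_i\times n_{i-1}}$ ($n_0=n_G$, $n_{\ell+1}=n_u$), and $\phi^i$ applies a scalar function $\varphi:\mathbb{R}\to\mathbb{R}$ with $\varphi(0)=0$ elementwise. Let $X=\{x\in\mathbb{R}^{n_G}: -h\le Hx\le h\}$ with $H\in\mathbb{R}^{n_X\times n_G}$, $h\in\mathbb{R}^{n_X}$, $h\ge 0$, and denote by $H_i^\top$ the $i$-th row of $H$ (so $H_i\in\mathbb{R}^{n_G}$). Set $n_\phi=n_1+\dots+n_\ell$, $v^i = W^i w^{i-1}$, $v_\phi=(v^1,\dots,v^\ell)$, $w_\phi=(w^1,\dots,w^\ell)\in\mathbb{R}^{n_\phi}$, and let $N=\begin{bmatrix} N_{ux} & N_{uw}\\ N_{vx} & N_{vw}\end{bmatrix}$ be the matrix with $\begin{bmatrix}u\\ v_\phi\end{bmatrix}=N\begin{bmatrix}x\\ w_\phi\end{bmatrix}$, i.e. $N_{ux}=0$, $N_{uw}=\begin{bmatrix}0&\cdots&0&W^{\ell+1}\end{bmatrix}$, $N_{vx}=\begin{bmatrix}W^1\\0\\\vdots\\0\end{bmatrix}$,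 and $N_{vw}$ is the block matrix whose only nonzero blocks are $W^2,\dots,W^\ell$ on the first block subdiagonal (block row $i$, block column $i-1$ equals $W^i$ for $i=2,\dots,\ell$). Let $\underline v,\bar v\in\mathbb{R}^{n_\phi}$ with $\underline v\le\bar v$ be such that $v_\phi\in[\underline v,\bar v]$ whenever $x\in X$, and let $\alpha_\phi,\beta_\phi\in\mathbb{R}^{n_\phi}$ with $\alpha_\phi\le\beta_\phi$ be such that for each $i=1,\dots,n_\phi$, $(\varphi(\nu)-\alpha_{\phi,i}\nu)(\beta_{\phi,i}\nu-\varphi(\nu))\ge 0$ for all $\nu\in[\underline v_i,\bar v_i]$. Put $A_\phi=\mathrm{diag}(\alpha_\phi)$, $B_\phi=\mathrm{diag}(\beta_\phi)$, $C_1=N_{uw}\frac{B_\phi-A_\phi}{2}$, $C_2=N_{uw}\frac{A_\phi+B_\phi}{2}$, $C_3=N_{vw}\frac{B_\phi-A_\phi}{2}$, $C_4=N_{vw}\frac{A_\phi+B_\phi}{2}$, and $$\tilde N=\begin{bmatrix}\tilde N_{ux}&\tilde N_{uz}\\ \tilde N_{vx}&\tilde N_{vz}\end{bmatrix}=\begin{bmatrix} N_{ux}+C_2(I-C_4)^{-1}N_{vx} & C_1+C_2(I-C_4)^{-1}C_3\\ (I-C_4)^{-1}N_{vx} & (I-C_4)^{-1}C_3\end{bmatrix},$$ with $\tilde R_V=\begin{bmatrix} I_{n_G} & 0\\ \tilde N_{ux}&\tilde N_{uz}\end{bmatrix}$ and $\tilde R_\phi=\begin{bmatrix}\tilde N_{vx}&\tilde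 N_{vz}\\ 0 & I_{n_\phi}\end{bmatrix}$. Suppose there exist $P\in\mathbb{S}^{n_G}_{++}$ and $\lambda\in\mathbb{R}^{n_\phi}$ with $\lambda\ge 0$ such that, with $\Lambda=\mathrm{diag}(\lambda)$, $$\tilde R_V^\top\begin{bmatrix}A_G^\top PA_G-P & A_G^\top PB_G\\ B_G^\top PA_G & B_G^\top PB_G\end{bmatrix}\tilde R_V+\tilde R_\phi^\top\begin{bmatrix}\Lambda&0\\0&-\Lambda\end{bmatrix}\tilde R_\phi<0$$ and $\begin{bmatrix} h_i^2 & H_i^\top\\ H_i & P\end{bmatrix}\ge 0$ for $i=1,\dots,n_X$. Then (i) the closed-loop system is locally asymptotically stable around the equilibrium $x_*=0$, and (ii) the ellipsoid $\mathcal{E}(P)=\{x: x^\top Px\le 1\}$ is contained in the region of attraction $\mathcal{R}=\{x_0\in X: \lim_{k\to\infty}\chi(k;x_0)=0\}$, where $\chi(k;x_0)$ is the closed-loop solution at time $k$ from $x(0)=x_0$.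
   Context: Inequalities between vectors are elementwise; $\mathbb{S}^n_{++}$ denotes symmetric positive definite $n\times n$ matrices; matrix inequalities $<0$, $\ge 0$ are in the sense of negative definiteness/positive semidefiniteness. The matrix $I-C_4$ is invertible because $N_{vw}$ is strictly block lower triangular. All biases of the network are zero so that $x_*=0$, $u_*=0$ is an equilibrium. *)

From HB Require Import structures.
From mathcomp Require Import all_boot all_order all_algebra.
From mathcomp Require Import all_classical all_reals all_analysis.
Set Implicit Arguments. Unset Strict Implicit. Unset Printing Implicit Defensive.
Import Order.TTheory GRing.Theory Num.Theory.
Import numFieldNormedType.Exports.
Local Open Scope ring_scope.
Local Open Scope classical_set_scope.

Section NN.
Variable R : realType.

Definition posdef n (M : 'M[R]_n) : Prop :=
  M^T = M /\ forall z : 'cV[R]_n, z != 0 -> 0 < (z^T *m M *m z) 0 0.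
Definition negdef n (M : 'M[R]_n) : Prop :=
  M^T = M /\ forall z : 'cV[R]_n, z != 0 -> (z^T *m M *m z) 0 0 < 0.
Definition psd n (M : 'M[R]_n) : Prop :=
  M^T = M /\ forall z : 'cV[R]_n, 0 <= (z^T *m M *m z) 0 0.

(* Layer sizes d : nat -> nat: d 0 = n_G, d i = n_i, d (l.+1) = n_u.
   W i : 'M_(d i.+1, d i) is the paper's W^{i+1}. *)
Variables (l : nat) (d : nat -> nat) (W : forall i : nat, 'M[R]_(d i.+1, d i))
          (varphi : R -> R).

Fixpoint wlayer (x : 'cV[R]_(d 0)) (i : nat) : 'cV[R]_(d i) :=
  match i with
  | 0 => x
  | i'.+1 => map_mx varphi (W i' *m wlayer x i')
  end.

Definition vlayer (x : 'cV[R]_(d 0)) (i : nat) : 'cV[R]_(d i.+1) :=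
  W i *m wlayer x i.

Definition nncontrol (x : 'cV[R]_(d 0)) : 'cV[R]_(d l.+1) := W l *m wlayer x l.

Definition nphi : nat := (\sum_(i < l) d i.+1)%N.

Definition vphi (x : 'cV[R]_(d 0)) : 'cV[R]_nphi :=
  @mxcol R l (fun i : 'I_l => d i.+1) 1 (fun i => vlayer x i).

Definition N_ux : 'M[R]_(d l.+1, d 0) := 0.
Definition N_uw : 'M[R]_(d l.+1, nphi) :=
  @mxrow R l (fun j : 'I_l => d j.+1) (d l.+1)
    (fun j => if (j.+1 == l)%N then conform_mx 0 (W l) else 0).
Definition N_vx : 'M[R]_(nphi, d 0) :=
  @mxcol R l (fun i : 'I_l => d i.+1) (d 0)
    (fun i => if (i == 0 :> nat)%N then conform_mx 0 (W 0) else 0).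
Definition N_vw : 'M[R]_(nphi, nphi) :=
  @mxblock R l l (fun i : 'I_l => d i.+1) (fun j : 'I_l => d j.+1)
    (fun i j => if (i == j.+1 :> nat)%N then conform_mx 0 (W i) else 0).

Definition closed_loop (AG : 'M[R]_(d 0)) (BG : 'M[R]_(d 0, d l.+1))
  (x : 'cV[R]_(d 0)) : 'cV[R]_(d 0) := AG *m x + BG *m nncontrol x.

Definition chi AG BG (k : nat) (x0 : 'cV[R]_(d 0)) : 'cV[R]_(d 0) :=
  iter k (closed_loop AG BG) x0.

End NN.

Definition lyap_stable (R : realType) n (f : 'cV[R]_n -> 'cV[R]_n) : Prop :=
  forall eps : R, 0 < eps -> exists delta : R, 0 < delta /\
    forall x0 : 'cV[R]_n, `|x0| < delta -> forall k, `|iter k f x0| < eps.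
Definition loc_attractive (R : realType) n (f : 'cV[R]_n -> 'cV[R]_n) : Prop :=
  exists delta : R, 0 < delta /\
    forall x0 : 'cV[R]_n, `|x0| < delta -> (fun k => iter k f x0) @ \oo --> (0 : 'cV[R]_n).
Definition loc_asympt_stable (R : realType) n (f : 'cV[R]_n -> 'cV[R]_n) : Prop :=
  f 0 = 0 /\ lyap_stable f /\ loc_attractive f.

(* The Lyapunov function is V x = x^T P x.  On the ellipsoid {V <= 1} the
   second LMI gives -h <= H x <= h, so the state lies in X and every
   pre-activation lies in [vlo, vhi]; there the sector condition writes the
   activation outputs as w = (A + B)/2 v + (B - A)/2 z with z_k^2 <= v_k^2.
   As N_vw is strictly block lower triangular, I - C4 is invertible and
   (u, v) becomes a linear function of (x, z): this is the loop transformation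
   encoded by the matrices Nt, i.e. Rt_V (x, z) = (x, u) and
   Rt_phi (x, z) = (v, z).  Evaluating the first LMI at (x, z) bounds
   V(x+) - V(x) + (v^T Lam v - z^T Lam z) by -e |x|^2, and the multiplier term
   is nonnegative.  Hence V decreases by e |x|^2 on the ellipsoid, which is
   therefore invariant, and comparing V with |x|^2 turns the decrease into a
   geometric one: this gives stability and convergence from every point of
   the ellipsoid. *)

From HB Require Import structures.
From mathcomp Require Import all_boot all_order all_algebra.
From mathcomp Require Import all_classical all_reals all_analysis.
From mathcomp Require Import ring lra.
Import Order.TTheory GRing.Theory Num.Theory.
Import numFieldNormedType.Exports.
Local Open Scope ring_scope.
Local Open Scope classical_set_scope.

Set Implicit Arguments. Unset Strict Implicit. Unset Printing Implicit Defensive.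

Definition qf (R : comPzRingType) n (M : 'M[R]_n) (z : 'cV[R]_n) : R :=
  (z^T *m M *m z) 0 0.

Section QuadraticForm.
Variable R : comPzRingType.

Lemma qfE n (M : 'M[R]_n) z : qf M z = \sum_i \sum_j z i 0 * M i j * z j 0.
Proof.
rewrite /qf mxE exchange_big /=; apply: eq_bigr => j _; rewrite !mxE big_distrl.
by apply: eq_bigr => i _; rewrite !mxE.
Qed.

Lemma qf_vec0 n (M : 'M[R]_n) : qf M 0 = 0.
Proof. by rewrite /qf mulmx0 mxE. Qed.

Lemma qf_mx0 n (z : 'cV[R]_n) : qf 0 z = 0.
Proof. by rewrite /qf mulmx0 mul0mx mxE. Qed.

Lemma qfZ n (M : 'M[R]_n) a z : qf M (a *: z) = a ^+ 2 * qf M z.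
Proof. by rewrite /qf !linearZ /= !scalemxAl scalerA -!scalemxAl mxE -expr2. Qed.

Lemma qfD n (A B : 'M[R]_n) z : qf (A + B) z = qf A z + qf B z.
Proof. by rewrite /qf mulmxDr mulmxDl mxE. Qed.

Lemma qfN n (A : 'M[R]_n) z : qf (- A) z = - qf A z.
Proof. by rewrite /qf mulmxN mulNmx mxE. Qed.

Lemma qf_mulmx m n (S : 'M[R]_(m, n)) (Q : 'M[R]_m) z :
  qf (S^T *m Q *m S) z = qf Q (S *m z).
Proof. by rewrite /qf trmx_mul !mulmxA. Qed.

Lemma qf_block p q (A : 'M[R]_p) (B : 'M[R]_(p, q)) (D : 'M[R]_q) y1 y2 :
  qf (block_mx A B B^T D) (col_mx y1 y2) =
  qf A y1 + 2 * (y1^T *m B *m y2) 0 0 + qf D y2.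
Proof.
rewrite /qf tr_col_mx mul_row_block mul_row_col !mulmxDl.
have -> : y2^T *m B^T *m y1 = (y1^T *m B *m y2)^T by rewrite !trmx_mul trmxK mulmxA.
by rewrite !mxE; ring.
Qed.

Lemma qf_block_diag p q (A : 'M[R]_p) (D : 'M[R]_q) y1 y2 :
  qf (block_mx A 0 0 D) (col_mx y1 y2) = qf A y1 + qf D y2.
Proof. by rewrite -[X in block_mx _ _ X _]trmx0 qf_block mulmx0 mul0mx mxE mulr0 addr0. Qed.

Lemma qf_lyapunov_block p r (A : 'M[R]_p) (B : 'M[R]_(p, r)) (P : 'M[R]_p) x u :
  qf (block_mx (A^T *m P *m A - P) (A^T *m P *m B) (B^T *m P *m A) (B^T *m P *m B))
     (col_mx x u) = qf P (A *m x + B *m u) - qf P x.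
Proof.
have -> : block_mx (A^T *m P *m A - P) (A^T *m P *m B) (B^T *m P *m A) (B^T *m P *m B)
    = (row_mx A B)^T *m P *m row_mx A B - block_mx P 0 0 0.
  by rewrite tr_row_mx mul_col_mx mul_col_row opp_block_mx add_block_mx !oppr0 !addr0.
by rewrite qfD qfN qf_mulmx mul_row_col qf_block_diag qf_mx0 addr0.
Qed.

Lemma qf_diag n (a : 'rV[R]_n) z : qf (diag_mx a) z = \sum_k a 0 k * z k 0 ^+ 2.
Proof.
by rewrite /qf mul_mx_diag mxE; apply: eq_bigr => k _; rewrite !mxE expr2 mulrCA mulrA.
Qed.

End QuadraticForm.

Section MatrixNorm.
Variable R : realDomainType.

Lemma normr_mx_entry_le m n (A : 'M[R]_(m, n)) i j : `|A i j| <= `|A|.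
Proof.
rewrite [leRHS]/Num.Def.normr /= mx_normrE.
by apply/bigmax_geP; right; exists (i, j).
Qed.

Lemma normr_mx_le m n (A : 'M[R]_(m, n)) c :
  0 <= c -> (forall i j, `|A i j| <= c) -> `|A| <= c.
Proof.
move=> c0 Ac; rewrite [leLHS]/Num.Def.normr /= mx_normrE.
by apply: bigmax_le => // -[i j] _; exact: Ac.
Qed.

Lemma normr_trmx m n (A : 'M[R]_(m, n)) : `|A^T| = `|A|.
Proof.
apply/eqP; rewrite eq_le; apply/andP; split; apply: normr_mx_le => // i j.
  by rewrite mxE normr_mx_entry_le.
by have := normr_mx_entry_le A^T j i; rewrite mxE.
Qed.

Lemma normr_col_mx_ge p q n (x : 'M[R]_(p, n)) (z : 'M[R]_(q, n)) :
  `|x| <= `|col_mx x z|.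
Proof.
apply: normr_mx_le => // i j.
by have := normr_mx_entry_le (col_mx x z) (lshift q i) j; rewrite col_mxEu.
Qed.

End MatrixNorm.

Section DefiniteForm.
Variable R : realType.

Lemma qf_le_normr2 n (M : 'M[R]_n) :
  exists2 c, 0 < c & forall z, qf M z <= c * `|z| ^+ 2.
Proof.
exists (1 + \sum_i \sum_j `|M i j|).
  by rewrite ltr_wpDr // sumr_ge0 // => i _; rewrite sumr_ge0.
move=> z; rewrite qfE mulrDl mul1r; apply: ler_wpDl; first by rewrite mulr_ge0.
rewrite big_distrl /=; apply: ler_sum => i _; rewrite big_distrl /=.
apply: ler_sum => j _; apply: (le_trans (ler_norm _)).
rewrite !normrM [`|z i 0| * _]mulrC -mulrA ler_wpM2l // expr2.
by rewrite ler_pM ?normr_mx_entry_le.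
Qed.

Lemma qf_continuous n (M : 'M[R]_n) : continuous (fun r : 'rV[R]_n => qf M r^T).
Proof.
have coord k : continuous (fun r : 'rV[R]_n => r 0 k) by exact: coord_continuous.
have -> : (fun r : 'rV[R]_n => qf M r^T) =
    (fun r => \sum_i \sum_j r 0 i * M i j * r 0 j).
  by apply/funext => r; rewrite qfE; under eq_bigr do under eq_bigr do rewrite !mxE.
apply: continuous_big => [|i _]; first exact: add_continuous.
apply: continuous_big => [|j _]; first exact: add_continuous.
move=> r; have ci := @continuousM R _ (fun s : 'rV[R]_n => s 0 i) (fun=> M i j) r
  (coord i r) (@cst_continuous _ _ _ r).
by have := @continuousM R _ _ (fun s : 'rV[R]_n => s 0 j) r ci (coord j r).
Qed.

Lemma qf_ge_normr2 n (M : 'M[R]_n) : (forall z, z != 0 -> 0 < qf M z) ->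
  exists2 m, 0 < m & forall z, m * `|z| ^+ 2 <= qf M z.
Proof.
move=> Mpos; pose S := [set r : 'rV[R]_n | `|r| = 1].
have unit_dir z : z != 0 -> S (`|z|^-1 *: z)^T.
  move=> z0; rewrite /S /= normr_trmx normrZ normrV ?unitfE ?normr_eq0 //.
  by rewrite normr_id mulVf // normr_eq0.
have [Sne|S0] := pselect (S !=set0); last first.
  exists 1 => // z; have [->|z0] := eqVneq z 0.
    by rewrite qf_vec0 normr0 expr0n mulr0.
  by exfalso; apply: S0; exists (`|z|^-1 *: z)^T; exact: unit_dir.
have Scompact : compact S.
  apply: bounded_closed_compact.
    by apply: filterS (nbhs_pinfty_ge (num_real 1)) => K K1 r /= ->.
  apply: (@preimage_closed _ R^o (@Num.norm _ 'rV[R]_n) [set x : R | x = 1]).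
    by move=> r _; exact: norm_continuous.
  exact: closed_eq.
have [c Sc cmin] :=
  compact_EVT_min Sne Scompact (continuous_subspaceT (@qf_continuous n M)).
have c0 : c^T != 0.
  apply: contraPneq Sc => /(congr1 trmx); rewrite trmxK trmx0 => ->.
  by rewrite inE /S /= normr0 => /esym/eqP; rewrite oner_eq0.
exists (qf M c^T); first exact: Mpos.
move=> z; have [->|z0] := eqVneq z 0; first by rewrite qf_vec0 normr0 expr0n mulr0.
have -> : qf M z = `|z| ^+ 2 * qf M (`|z|^-1 *: z).
  by rewrite qfZ mulrA -exprMn mulfV ?normr_eq0 // expr1n mul1r.
rewrite mulrC ler_pM2l ?exprn_gt0 ?normr_gt0 //.
by have := cmin _ (mem_set (unit_dir z z0)); rewrite trmxK.
Qed.

Lemma posdef_ge_normr2 n (P : 'M[R]_n) : posdef P ->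
  exists2 m, 0 < m & forall z, m * `|z| ^+ 2 <= qf P z.
Proof. by case=> _; exact: qf_ge_normr2. Qed.

Lemma negdef_le_normr2 n (M : 'M[R]_n) : negdef M ->
  exists2 e, 0 < e & forall z, qf M z <= - (e * `|z| ^+ 2).
Proof.
case=> _ Mneg; have [|e e0 eM] := @qf_ge_normr2 n (- M).
  by move=> z z0; rewrite qfN oppr_gt0; exact: Mneg.
by exists e => // z; rewrite lerNr -qfN.
Qed.

End DefiniteForm.

Section QuadraticLyapunov.
Variables (R : realType) (n : nat) (f : 'cV[R]_n -> 'cV[R]_n) (P : 'M[R]_n).
Variables (m c rho : R).
Hypotheses (m_gt0 : 0 < m) (c_gt0 : 0 < c).
Hypothesis qf_ge : forall z, m * `|z| ^+ 2 <= qf P z.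
Hypothesis qf_le : forall z, qf P z <= c * `|z| ^+ 2.
Hypotheses (rho_ge0 : 0 <= rho) (rho_lt1 : rho < 1).
Hypothesis f_contract : forall x, qf P x <= 1 -> qf P (f x) <= rho * qf P x.

Lemma qf_ge0 z : 0 <= qf P z.
Proof. by apply: le_trans _ (qf_ge z); rewrite mulr_ge0 ?sqr_ge0 // ltW. Qed.

Lemma normr_lt_of_qf z e : 0 < e -> qf P z < m * e ^+ 2 -> `|z| < e.
Proof.
move=> e0 lt_qf; have := le_lt_trans (qf_ge z) lt_qf.
by rewrite ltr_pM2l // (@ltr_pXn2r _ 2) ?nnegrE // ltW.
Qed.

Lemma qf_lt_of_normr e : 0 < e ->
  exists2 delta, 0 < delta & forall z, `|z| < delta -> qf P z < e.
Proof.
move=> e0; exists (Num.min 1 (e / c)); first by rewrite lt_min ltr01 divr_gt0.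
move=> z; rewrite lt_min => /andP[z_lt1 z_lt].
have z2 : `|z| ^+ 2 <= `|z| by rewrite expr2 ler_piMl // ltW.
apply: le_lt_trans (qf_le z) _; apply: le_lt_trans (ler_wpM2l (ltW c_gt0) z2) _.
by rewrite mulrC -ltr_pdivlMr.
Qed.

Lemma qf_iter x0 k : qf P x0 <= 1 -> qf P (iter k f x0) <= rho ^+ k * qf P x0.
Proof.
move=> x0_in; elim: k => [|k IHk]; first by rewrite mul1r.
have rhok_le1 : rho ^+ k <= 1 by rewrite exprn_ile1 // ltW.
have xk_in : qf P (iter k f x0) <= 1.
  by apply: le_trans IHk (le_trans (ler_piMl (qf_ge0 _) rhok_le1) x0_in).
by rewrite iterS exprS -mulrA; apply: le_trans (f_contract xk_in) (ler_wpM2l _ IHk).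
Qed.

Lemma qf_iter_le x0 k : qf P x0 <= 1 -> qf P (iter k f x0) <= qf P x0.
Proof.
move=> x0_in; apply: le_trans (qf_iter k x0_in) _.
by rewrite ler_piMl ?qf_ge0 // exprn_ile1 // ltW.
Qed.

Lemma iter_cvg0 x0 : qf P x0 <= 1 -> (fun k => iter k f x0) @ \oo --> (0 : 'cV[R]_n).
Proof.
move=> x0_in; apply/(@cvgr0Pnorm_lt R 'cV[R]_n) => e e0.
have V1_gt0 : 0 < qf P x0 + 1 by rewrite ltr_wpDl ?qf_ge0.
have rho_abs : `|rho| < 1 by rewrite ger0_norm.
have bound_gt0 : 0 < m * e ^+ 2 / (qf P x0 + 1) by rewrite !divr_gt0 ?mulr_gt0 ?exprn_gt0.
have rhok_small : \forall k \near \oo, `|rho ^+ k| < m * e ^+ 2 / (qf P x0 + 1).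
  exact: (iffLR (cvgr0Pnorm_lt _)) (cvg_expr rho_abs) _ bound_gt0.
near=> k; apply: normr_lt_of_qf => //; apply: le_lt_trans (qf_iter k x0_in) _.
have : rho ^+ k < m * e ^+ 2 / (qf P x0 + 1).
  by rewrite -[rho ^+ k]ger0_norm ?exprn_ge0 //; near: k.
rewrite ltr_pdivlMr // => lt_rhok; apply: le_lt_trans lt_rhok.
by rewrite ler_wpM2l ?exprn_ge0 // lerDl.
Unshelve. all: by end_near.
Qed.

Lemma lyap_stable_of_qf : lyap_stable f.
Proof.
move=> e e0; have bound_gt0 : 0 < Num.min 1 (m * e ^+ 2).
  by rewrite lt_min ltr01 mulr_gt0 ?exprn_gt0.
have [delta delta0 small] := qf_lt_of_normr bound_gt0.
exists delta; split => // x0 /small; rewrite lt_min => /andP[/ltW x0_in x0_small] k.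
exact: normr_lt_of_qf (le_lt_trans (qf_iter_le k x0_in) x0_small).
Qed.

Lemma loc_attractive_of_qf : loc_attractive f.
Proof.
have [delta delta0 small] := qf_lt_of_normr ltr01.
by exists delta; split => // x0 /small/ltW; exact: iter_cvg0.
Qed.

End QuadraticLyapunov.

Theorem qf_lyapunov (R : realType) n (f : 'cV[R]_n -> 'cV[R]_n) (P : 'M[R]_n) e :
  posdef P -> 0 < e -> f 0 = 0 ->
  (forall x, qf P x <= 1 -> qf P (f x) <= qf P x - e * `|x| ^+ 2) ->
  loc_asympt_stable f /\
  forall x0, qf P x0 <= 1 -> (fun k => iter k f x0) @ \oo --> (0 : 'cV[R]_n).
Proof.
move=> Ppos e0 f0 f_dec.
have [m m0 qf_ge] := posdef_ge_normr2 Ppos.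
have [c c0 qf_le] := qf_le_normr2 P.
(* With V <= c |x|^2, a decrease by e' |x|^2 is a contraction by 1 - e'/c;
   taking e' <= c keeps that factor nonnegative. *)
pose e' := Num.min e c.
have e'0 : 0 < e' by rewrite lt_min e0 c0.
have rho_ge0 : 0 <= 1 - e' / c by rewrite subr_ge0 ler_pdivrMr // mul1r ge_min lexx orbT.
have rho_lt1 : 1 - e' / c < 1 by rewrite ltrBlDr ltrDl divr_gt0.
have f_contract x : qf P x <= 1 -> qf P (f x) <= (1 - e' / c) * qf P x.
  move=> /f_dec fx_le; have qx := qf_le x.
  have : e' / c * qf P x <= e * `|x| ^+ 2.
    apply: le_trans (ler_wpM2l (divr_ge0 (ltW e'0) (ltW c0)) qx) _.
    by rewrite mulrA divfK ?gt_eqF // ler_wpM2r ?exprn_ge0 // ge_min lexx.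
  lra.
split; last exact: iter_cvg0 m0 qf_ge rho_ge0 rho_lt1 f_contract.
split; first exact: f0.
split; first exact: lyap_stable_of_qf m0 c0 qf_ge qf_le rho_ge0 rho_lt1 f_contract.
exact: loc_attractive_of_qf m0 c0 qf_ge qf_le rho_ge0 rho_lt1 f_contract.
Qed.

Section Network.
Variables (R : realType) (l : nat) (d : nat -> nat).
Variables (W : forall i : nat, 'M[R]_(d i.+1, d i)) (varphi : R -> R).

Definition wphi (x : 'cV[R]_(d 0)) : 'cV[R]_(nphi l d) :=
  @mxcol R l (fun i : 'I_l => d i.+1) 1 (fun i => wlayer W varphi x i.+1).

Lemma wphiE x : wphi x = map_mx varphi (vphi l W varphi x).
Proof. by apply/matrixP => i j; rewrite !mxE. Qed.

Lemma vphi_N x : vphi l W varphi x = N_vx l W *m x + N_vw l W *m wphi x.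
Proof.
rewrite /N_vx /N_vw /wphi /vphi mxcol_mul mul_mxblock_mxrow -mxcolD.
apply: eq_mxcol => -[[|i] lt_il] /=.
  by rewrite conform_mx_id big1 ?addr0 // => j _; rewrite mul0mx.
rewrite mul0mx add0r (bigD1 (Ordinal (ltnW lt_il))) //= eqxx conform_mx_id.
rewrite big1 ?addr0 // => j /= ji; case: eqP => [ij|]; last by rewrite mul0mx.
by case/eqP: ji; apply: val_inj; case: ij.
Qed.

Lemma closed_loop0 AG (BG : 'M[R]_(d 0, d l.+1)) :
  varphi 0 = 0 -> closed_loop W varphi AG BG 0 = 0.
Proof.
move=> phi0; have wlayer0 i : wlayer W varphi 0 i = 0.
  by elim: i => //= i ->; apply/matrixP => a b; rewrite mulmx0 !mxE phi0.
by rewrite /closed_loop /nncontrol wlayer0 !mulmx0 addr0.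
Qed.

End Network.

Lemma nncontrol_N (R : realType) l d (W : forall i : nat, 'M[R]_(d i.+1, d i))
    varphi x : (0 < l)%N ->
  nncontrol l W varphi x = N_ux R l d *m x + N_uw l W *m wphi l W varphi x.
Proof.
rewrite /N_ux mul0mx add0r; case: l W => [//|l'] W _.
rewrite /N_uw /wphi mul_mxrow_mxcol (bigD1 ord_max) //= eqxx conform_mx_id.
rewrite big1 ?addr0 // => j /= jl; case: eqP => [jl'|]; last by rewrite mul0mx.
by case/eqP: jl; apply: val_inj; case: jl'.
Qed.

Section StrictlyLowerTriangular.
Import tagnat.
Variables (R : realType) (l : nat) (d : nat -> nat).
Variable W : forall i : nat, 'M[R]_(d i.+1, d i).

Lemma N_vw_eq0 k k' : (sig1 k : nat) != (sig1 k').+1 -> N_vw l W k k' = 0.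
Proof.
move=> kk'; rewrite /N_vw mxE.
by case: eqP => [e|_]; [rewrite e eqxx in kk' | rewrite mxE].
Qed.

(* [N_vw] is strictly block lower triangular, so a fixed point of
   [v |-> v *m (N_vw *m D)^T] vanishes block by block, from the first block on. *)
Lemma unitmx_1B_N_vw_diag (delta : 'rV[R]_(nphi l d)) :
  (1%:M - N_vw l W *m diag_mx delta) \in unitmx.
Proof.
rewrite -unitmx_tr -row_free_unit; apply: inj_row_free => v.
set C := N_vw l W *m diag_mx delta => vC0.
have v_fix : v^T = C *m v^T.
  move/(congr1 trmx): vC0; rewrite trmx_mul trmxK trmx0 mulmxBl mul1mx.
  by move/eqP; rewrite subr_eq0 => /eqP.
suff v0 t (k : 'I_(nphi l d)) : (sig1 k < t)%N -> v^T k 0 = 0.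
  by apply: trmx_inj; apply/matrixP => k j; rewrite ord1 (v0 (sig1 k).+1) ?mxE.
elim: t k => [//|t IHt] k kt; rewrite v_fix mxE big1 // => k' _.
rewrite /C mul_mx_diag mxE; have [kk'|kk'] := eqVneq (sig1 k : nat) (sig1 k').+1.
  by rewrite IHt ?mulr0 // -ltnS -kk'.
by rewrite N_vw_eq0 // !mul0r.
Qed.

End StrictlyLowerTriangular.

Lemma loop_transformation (R : comUnitRingType) p q r (Nux : 'M[R]_(r, p))
    (Nuw : 'M[R]_(r, q)) (Nvx : 'M[R]_(q, p)) (Nvw Dc Dr : 'M[R]_q)
    (x : 'cV[R]_p) (z w v : 'cV[R]_q) (u : 'cV[R]_r) :
  (1%:M - Nvw *m Dc) \in unitmx ->
  u = Nux *m x + Nuw *m w -> v = Nvx *m x + Nvw *m w -> w = Dc *m v + Dr *m z ->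
  let Ninv := invmx (1%:M - Nvw *m Dc) in
  v = Ninv *m Nvx *m x + Ninv *m (Nvw *m Dr) *m z /\
  u = (Nux + Nuw *m Dc *m Ninv *m Nvx) *m x
      + (Nuw *m Dr + Nuw *m Dc *m Ninv *m (Nvw *m Dr)) *m z.
Proof.
move=> unit_IC -> vE wE Ninv.
have IC_v : (1%:M - Nvw *m Dc) *m v = Nvx *m x + Nvw *m Dr *m z.
  by rewrite mulmxBl mul1mx {1}vE wE mulmxDr !mulmxA addrCA addrAC subrr add0r.
have {}vE : v = Ninv *m Nvx *m x + Ninv *m (Nvw *m Dr) *m z.
  by rewrite -[v](mulKmx unit_IC) IC_v mulmxDr !mulmxA.
split=> //; rewrite wE vE !mulmxDr !mulmxDl !mulmxA.
by rewrite [in RHS](addrC (Nuw *m Dr *m z)) !addrA.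
Qed.

Lemma sector_decomposition (R : realFieldType) (a b nu y : R) :
  a <= b -> 0 <= (y - a * nu) * (b * nu - y) ->
  exists2 zeta, y = (a + b) / 2 * nu + (b - a) / 2 * zeta & zeta ^+ 2 <= nu ^+ 2.
Proof.
move=> ab sector; have [ba|ba] := eqVneq a b.
  exists 0; last by rewrite expr0n sqr_ge0.
  move: sector; rewrite -ba => sector.
  have : (y - a * nu) ^+ 2 == 0 by rewrite eq_le sqr_ge0 andbT; nra.
  by rewrite sqrf_eq0 subr_eq0 => /eqP ->; field.
have r_gt0 : 0 < (b - a) / 2 by rewrite divr_gt0 // subr_gt0 lt_def eq_sym ba.
exists ((y - (a + b) / 2 * nu) / ((b - a) / 2)).
  by rewrite [(b - a) / 2 * _]mulrC divfK ?gt_eqF // addrC subrK.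
have : (y - a * nu) * (b * nu - y) =
    ((b - a) / 2) ^+ 2 * (nu ^+ 2 - ((y - (a + b) / 2 * nu) / ((b - a) / 2)) ^+ 2).
  by field; rewrite subr_eq0 eq_sym.
by move=> E; move: sector; rewrite E pmulr_rge0 ?exprn_gt0 // subr_ge0.
Qed.

Lemma sector_loop_transform (R : realFieldType) n (phi : R -> R)
    (alpha beta v : 'cV[R]_n) :
  (forall k, alpha k 0 <= beta k 0) ->
  (forall k, 0 <= (phi (v k 0) - alpha k 0 * v k 0) * (beta k 0 * v k 0 - phi (v k 0))) ->
  exists2 z : 'cV[R]_n,
    map_mx phi v = 2^-1 *: (diag_mx alpha^T + diag_mx beta^T) *m v
                   + 2^-1 *: (diag_mx beta^T - diag_mx alpha^T) *m z
    & forall k, z k 0 ^+ 2 <= v k 0 ^+ 2.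
Proof.
move=> ab sector.
have [zeta phiE zeta_le] :=
  fin_all_exists2 (fun k => sector_decomposition (ab k) (sector k)).
exists (\col_k zeta k); last by move=> k; rewrite mxE.
rewrite -raddfD -raddfB -!linearZ /= !mul_diag_mx; apply/matrixP => k j.
by rewrite ord1 !mxE phiE !(mulrC 2^-1).
Qed.

Section LyapunovInequality.
Variable R : realDomainType.

Lemma qf_diag_le n (lambda : 'rV[R]_n) (z v : 'cV[R]_n) :
  (forall k, 0 <= lambda 0 k) -> (forall k, z k 0 ^+ 2 <= v k 0 ^+ 2) ->
  qf (diag_mx lambda) z <= qf (diag_mx lambda) v.
Proof.
by move=> lambda_ge0 zv; rewrite !qf_diag; apply: ler_sum => k _; exact: ler_wpM2l.
Qed.

Lemma qf_lmi_decrease p q r (A : 'M[R]_p) (B : 'M[R]_(p, r)) (P : 'M[R]_p)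
    (Lam : 'M[R]_q) (RV : 'M[R]_(p + r, p + q)) (Rphi : 'M[R]_(q + q, p + q))
    e x z (u : 'cV[R]_r) v :
  (forall y, qf (RV^T *m block_mx (A^T *m P *m A - P) (A^T *m P *m B)
                                  (B^T *m P *m A) (B^T *m P *m B) *m RV
                 + Rphi^T *m block_mx Lam 0 0 (- Lam) *m Rphi) y
             <= - (e * `|y| ^+ 2)) ->
  0 <= e -> RV *m col_mx x z = col_mx x u -> Rphi *m col_mx x z = col_mx v z ->
  qf Lam z <= qf Lam v ->
  qf P (A *m x + B *m u) <= qf P x - e * `|x| ^+ 2.
Proof.
move=> lmi e_ge0 RV_xz Rphi_xz Lam_zv; have := lmi (col_mx x z).
rewrite qfD !qf_mulmx RV_xz Rphi_xz qf_lyapunov_block qf_block_diag qfN.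
have : e * `|x| ^+ 2 <= e * `|col_mx x z| ^+ 2.
  by rewrite ler_wpM2l // ler_pXn2r ?nnegrE // normr_col_mx_ge.
lra.
Qed.

End LyapunovInequality.

Lemma psd_block_row_bound (R : realType) n (r : 'rV[R]_n) (P : 'M[R]_n) h x :
  psd (block_mx (h ^+ 2)%:M r r^T P) -> 0 <= h -> qf P x <= 1 ->
  - h <= (r *m x) 0 0 <= h.
Proof.
case=> _ psdM h_ge0 Vx; set s := (r *m x) 0 0.
have qf_1 : qf ((h ^+ 2)%:M : 'M[R]_1) 1 = h ^+ 2.
  by rewrite /qf trmx1 mul1mx mulmx1 mxE eqxx mulr1n.
have cross : ((1 : 'M[R]_1)^T *m r *m (- s *: x)) 0 0 = - s * s.
  by rewrite trmx1 mul1mx -scalemxAr mxE.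
(* At (1, -s x) the form is h^2 - 2 s^2 + s^2 x^T P x, and x^T P x <= 1. *)
have := psdM (col_mx 1 (- s *: x)); rewrite -/(qf _ _) qf_block qfZ qf_1 cross => Q.
have s2 : s ^+ 2 <= h ^+ 2 by nra.
by apply/andP; split; nra.
Qed.

Unset Implicit Arguments. Set Strict Implicit.

Theorem lemma2 (R : realType) (l : nat) (d : nat -> nat)
  (W : forall i : nat, 'M[R]_(d i.+1, d i)) (varphi : R -> R)
  (AG : 'M[R]_(d 0)) (BG : 'M[R]_(d 0, d l.+1))
  (nX : nat) (H : 'M[R]_(nX, d 0)) (h : 'cV[R]_nX)
  (vlo vhi alpha beta lambda : 'cV[R]_(nphi l d)) (P : 'M[R]_(d 0)) :
  (0 < l)%N ->
  varphi 0 = 0 ->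
  (forall i, 0 <= h i 0) ->
  let X := [set x : 'cV[R]_(d 0) | forall i, - h i 0 <= (H *m x) i 0 <= h i 0] in
  (forall k, vlo k 0 <= vhi k 0) ->
  (forall x, X x -> forall k, vlo k 0 <= vphi l W varphi x k 0 <= vhi k 0) ->
  (forall k, alpha k 0 <= beta k 0) ->
  (forall k (nu : R), vlo k 0 <= nu <= vhi k 0 ->
     0 <= (varphi nu - alpha k 0 * nu) * (beta k 0 * nu - varphi nu)) ->
  let Aphi := diag_mx alpha^T in
  let Bphi := diag_mx beta^T in
  let C1 := N_uw l W *m (2^-1 *: (Bphi - Aphi)) in
  let C2 := N_uw l W *m (2^-1 *: (Aphi + Bphi)) in
  let C3 := N_vw l W *m (2^-1 *: (Bphi - Aphi)) in
  let C4 := N_vw l W *m (2^-1 *: (Aphi + Bphi)) in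
  let Ninv := invmx (1%:M - C4) in
  let Nt_ux := N_ux R l d + C2 *m Ninv *m N_vx l W in
  let Nt_uz := C1 + C2 *m Ninv *m C3 in
  let Nt_vx := Ninv *m N_vx l W in
  let Nt_vz := Ninv *m C3 in
  let Rt_V : 'M[R]_(d 0 + d l.+1, d 0 + nphi l d) := block_mx 1%:M 0 Nt_ux Nt_uz in
  let Rt_phi : 'M[R]_(nphi l d + nphi l d, d 0 + nphi l d) :=
    block_mx Nt_vx Nt_vz 0 1%:M in
  let Lam := diag_mx lambda^T in
  posdef P ->
  (forall k, 0 <= lambda k 0) ->
  negdef (Rt_V^T *m block_mx (AG^T *m P *m AG - P) (AG^T *m P *m BG)
                             (BG^T *m P *m AG) (BG^T *m P *m BG) *m Rt_V
          + Rt_phi^T *m block_mx Lam 0 0 (- Lam) *m Rt_phi) ->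
  (forall i : 'I_nX,
     psd (block_mx ((h i 0 ^+ 2)%:M : 'M[R]_1) (row i H) (row i H)^T P)) ->
  loc_asympt_stable (closed_loop W varphi AG BG) /\
  (forall x0 : 'cV[R]_(d 0), (x0^T *m P *m x0) 0 0 <= 1 ->
     X x0 /\ (fun k => chi W varphi AG BG k x0) @ \oo --> (0 : 'cV[R]_(d 0))).
Proof.
move=> l_gt0 phi0 h_ge0 X _ v_in alpha_le_beta sector Aphi Bphi C1 C2 C3 C4 Ninv
  Nt_ux Nt_uz Nt_vx Nt_vz Rt_V Rt_phi Lam Ppos lambda_ge0 lmi ellipsoid_lmi.
have [e e_gt0 lmi_e] := negdef_le_normr2 lmi.
have ellipsoid_sub_X x : qf P x <= 1 -> X x.
  move=> Vx i; have := psd_block_row_bound (ellipsoid_lmi i) (h_ge0 i) Vx.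
  by rewrite -row_mul mxE.
have decrease x : qf P x <= 1 ->
    qf P (closed_loop W varphi AG BG x) <= qf P x - e * `|x| ^+ 2.
  move=> /ellipsoid_sub_X /v_in v_range.
  have [z w_eq z_le] :=
    sector_loop_transform alpha_le_beta (fun k => sector k _ (v_range k)).
  have unit_IC : (1%:M - C4) \in unitmx.
    by rewrite /C4 /Aphi /Bphi -raddfD -linearZ unitmx_1B_N_vw_diag.
  have [vE uE] := loop_transformation unit_IC (nncontrol_N W varphi x l_gt0)
    (vphi_N l W varphi x) (etrans (wphiE l W varphi x) w_eq).
  apply: (qf_lmi_decrease lmi_e (ltW e_gt0) _ _ (qf_diag_le _ z_le)).
  - by rewrite mul_block_col mul1mx mul0mx addr0 uE.
  - by rewrite mul_block_col mul0mx add0r mul1mx vE.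
  - by move=> k; rewrite mxE.
have [stable attract] := qf_lyapunov Ppos e_gt0 (closed_loop0 W AG BG phi0) decrease.
by split=> // x0 Vx0; split; [exact: ellipsoid_sub_X | exact: attract].
Qed.
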